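(* Let $G_{\max}>0$ and $\mu>0$ be real constants, and let $N_r\ge 1$ and $N_t\ge 2$ be integers. Let $\Delta G_{1},\dots,\Delta G_{2N_t}$ be i.i.d. half-normal random variables, $\Delta G_j\sim|\mathcal{N}(0,G_{\max}^2/9)|$ (i.e. $\Delta G_j=|Z_j|$ with $Z_j\sim\mathcal{N}(0,G_{\max}^2/9)$), and set $T_j=\Delta G_j/\mu$ for $j=1,\dots,2N_t$. Define the row latency $T^{\mathsf{row}}=\max_{1\le j\le 2N_t}T_j$ and the expected write latency $T_{\mathsf{write}}=2N_r\,\mathbb{E}[T^{\mathsf{row}}]$. Then $$T_{\mathsf{write}}\le \frac{2\sqrt{2}\,G_{\max}}{3\mu}\,N_r\left(\sqrt{\ln N_t}+\frac{1}{\sqrt{\pi}\,\ln N_t}\right).$$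
   Context: Interpretation (model from the paper): a real-mapped $N_r\times N_t$ complex Rayleigh-fading channel matrix (a $2N_r\times 2N_t$ real matrix whose entries are $\mathcal{N}(0,G_{\max}^2/9)$, scaled by the three-sigma rule into conductance range $[-G_{\max},G_{\max}]$) is written row by row into a fully reset one-transistor-one-resistor RRAM array using differential device pairs; each device's conductance must increase by $\Delta G_j$, the magnitude of its target entry. Under the write-without-verification scheme the conductance grows at deterministic rate $\mu$ (in expectation), so writing a device takes time $\Delta G_j/\mu$; a row takes the maximum of its $2N_t$ device times, and the real-mapped matrix consists of two identical processes of $N_r$ rows each, giving $T_{\mathsf{write}}=2N_r\mathbb{E}[T^{\mathsf{row}}]$. *)

From HB Require Import structures.
From mathcomp Require Import all_boot all_order all_algebra.
From mathcomp Require Import all_classical all_reals all_analysis.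
Set Implicit Arguments. Unset Strict Implicit. Unset Printing Implicit Defensive.
Import Order.TTheory GRing.Theory Num.Theory.
Import numFieldTopology.Exports.
Local Open Scope classical_set_scope.
Local Open Scope ring_scope.

Definition mutually_independent_RV {d} {T : measurableType d} {R : realType}
  (P : probability T R) (n : nat) (Z : 'I_n -> {RV P >-> R}) : Prop :=
  forall (J : {set 'I_n}) (B : 'I_n -> set R),
    (forall j, j \in J -> measurable (B j)) ->
    P (\bigcap_(j in [set j | j \in J]) (Z j @^-1` B j)) =
    (\prod_(j in J) P (Z j @^-1` B j))%E.

(* Z has the normal distribution N(m, s^2) (s = standard deviation). *)
Definition normally_distributed {d} {T : measurableType d} {R : realType}
  (P : probability T R) (X : {RV P >-> R}) (m s : R) : Prop :=
  forall A : set R, measurable A -> distribution P X A = normal_prob m s A.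

Definition row_latency {d} {T : measurableType d} {R : realType}
  (P : probability T R) (Nt : nat) (Z : 'I_(2 * Nt) -> {RV P >-> R}) (mu : R)
  : T -> R :=
  fun w => \big[Num.max/0]_(j < 2 * Nt) (`|Z j w| / mu).

Definition write_latency {d} {T : measurableType d} {R : realType}
  (P : probability T R) (Nr Nt : nat) (Z : 'I_(2 * Nt) -> {RV P >-> R}) (mu : R)
  : \bar R :=
  ((2 * Nr)%:R%:E * 'E_P[row_latency Z mu])%E.

From HB Require Import structures.
From mathcomp Require Import all_boot all_order all_algebra.
From mathcomp Require Import all_classical all_reals all_analysis.
From mathcomp Require Import measurable_realfun ring.
Import Order.TTheory GRing.Theory Num.Theory.
Import numFieldNormedType.Exports.
Local Open Scope ring_scope.

(* For any threshold c >= 0, max_j |Z_j| <= c + sum_j (|Z_j| - c)^+, hence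
   E[max_j |Z_j|] <= c + 2 N_t E[(|Z| - c)^+]; no independence is needed.
   Completing the square bounds the N(0, s^2) density on |x| >= c by
   pdf(c) exp(-(c/s^2)(|x| - c)), so E[(|Z| - c)^+] <= 2 pdf(c) (s^2/c)^2.
   The threshold c = s sqrt(2 ln N_t) makes pdf(c) = 1/(s sqrt(2 pi) N_t), and
   the two terms add up to s sqrt 2 (sqrt(ln N_t) + 1/(sqrt pi ln N_t)),
   with s = G_max/3. *)

Lemma bigmax_le_add_sum_pos (R : realDomainType) (I : finType) (c : R) (a : I -> R) :
  0 <= c -> \big[Num.max/0]_i a i <= c + \sum_i Num.max 0 (a i - c).
Proof.
move=> c_ge0; have pos_ge0 i : 0 <= Num.max 0 (a i - c) by rewrite le_max lexx.
apply: bigmax_le => [|i _]; first by rewrite addr_ge0 ?sumr_ge0.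
apply: (@le_trans _ _ (c + Num.max 0 (a i - c))).
  by rewrite -lerBlDl le_max lexx orbT.
by rewrite lerD2l (bigD1 i) //= lerDl sumr_ge0.
Qed.

Section exponential_moment.
Context {R : realType}.
Local Open Scope classical_set_scope.
Local Notation mu := (@lebesgue_measure R).

Lemma mulr_expRN_le1 (u : R) : u * expR (- u) <= 1.
Proof.
rewrite expRN ler_pdivrMr ?expR_gt0 // mul1r.
by apply: le_trans (expR_ge1Dx u); rewrite lerDr.
Qed.

Lemma cvgy_expR_Nshift (b c : R) : 0 < b ->
  expR (- b * (y - c)) @[y --> +oo] --> 0.
Proof.
move=> b_gt0.
have -> : (fun y => expR (- b * (y - c))) = (fun y => expR (b * c) * expR (- (b * y))).
  by apply/funext => y; rewrite -expRD; congr expR; ring.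
rewrite -(mulr0 (expR (b * c))); apply: cvgMr.
apply: (cvg_comp (fun y => b * y) (fun z => expR (- z))); last exact: cvgr_expR.
exact: gt0_cvgMry.
Qed.

Lemma cvgy_mul_expR_Nshift (b c : R) : 0 < b ->
  (y - c) * expR (- b * (y - c)) @[y --> +oo] --> 0.
Proof.
move=> b_gt0; have b2_gt0 : 0 < b / 2 by rewrite divr_gt0.
apply: (@squeeze_cvgr _ _ _ _ (fun=> 0) (fun y => 2 / b * expR (- (b / 2) * (y - c)))).
- near=> y.
  have yc : c <= y by near: y; apply: nbhs_pinfty_ge; exact: num_real.
  rewrite mulr_ge0 ?subr_ge0 ?expR_ge0 //=.
  (* half of the exponent absorbs the factor [y - c], via [u e^-u <= 1] *)
  have -> : (y - c) * expR (- b * (y - c)) =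
      2 / b * (b / 2 * (y - c) * expR (- (b / 2 * (y - c)))) * expR (- (b / 2) * (y - c)).
    rewrite (_ : - b * (y - c) = - (b / 2 * (y - c)) + - (b / 2) * (y - c));
      last by field.
    by rewrite expRD; field; rewrite gt_eqF.
  rewrite ler_wpM2r ?expR_ge0 // -[leRHS]mulr1 ler_wpM2l ?mulr_expRN_le1 //.
  by rewrite divr_ge0 // ltW.
- exact: cvg_cst.
- by rewrite -(mulr0 (2 / b)); apply: cvgMr; exact: cvgy_expR_Nshift.
Unshelve. all: end_near. Qed.

Lemma is_derive_expR_Nshift (b c x : R) :
  is_derive x 1 (fun y => expR (- b * (y - c))) (- b * expR (- b * (x - c))).
Proof.
have dlin : is_derive x 1 (fun y => - b * (y - c)) (- b).
  have -> : (fun y => - b * (y - c)) = (- b) \*: (id - cst c) by [].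
  by apply: is_derive_eq; rewrite subr0 /GRing.scale /= mulr1.
exact: is_derive_eq (is_derive1_comp (is_derive_expR _) dlin) (mulrC _ _).
Qed.

Lemma integral_shift_mul_expR (b c : R) : 0 < b ->
  (\int[mu]_(x in `[c, +oo[) ((x - c) * expR (- b * (x - c)))%:E = (b ^- 2)%:E)%E.
Proof.
move=> b_gt0.
pose E y := expR (- b * (y - c)).
pose F y := - ((y - c) / b + b ^- 2) * E y.
have dE (x : R) : is_derive x 1 E (- b * E x) := is_derive_expR_Nshift b c x.
have dF (x : R) : is_derive x 1 F ((x - c) * E x).
  have dG : is_derive x 1 (fun y => - ((y - c) / b + b ^- 2)) (- b^-1).
    have -> : (fun y => - ((y - c) / b + b ^- 2)) =
        (- b^-1) \*: (id - cst c) - cst (b ^- 2).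
      apply/funext => y /=; rewrite !fctE.
      by change (- ((y - c) / b + b ^- 2) = - b^-1 * (y - c) - b ^- 2); ring.
    by apply: is_derive_eq; rewrite /GRing.scale /=; ring.
  have -> : F = (fun y => - ((y - c) / b + b ^- 2)) * E by [].
  apply: is_derive_eq (is_deriveM dG (dE x)) _; rewrite /GRing.scale /= /E.
  by field; rewrite gt_eqF.
have continuous_of_derive (g dg : R -> R) :
    (forall x : R, is_derive x 1 g (dg x)) -> continuous g.
  move=> dg_g x; apply/differentiable_continuous/derivable1_diffP.
  by have := dg_g x => ?; exact: ex_derive.
have dfE (x : R) : is_derive x 1 (fun y => (y - c) * E y) (E x - b * ((x - c) * E x)).
  have -> : (fun y => (y - c) * E y) = (id - cst c) * E by [].
  have dlin := is_deriveB (is_derive_id x 1) (is_derive_cst c x 1).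
  apply: is_derive_eq (is_deriveM dlin (dE x)) _.
  by rewrite /GRing.scale /= !fctE; ring.
have FE : F = (fun y => - b^-1 * ((y - c) * E y) + - b ^- 2 * E y).
  by apply/funext => y; rewrite /F; ring.
rewrite (@ge0_continuous_FTC2y _ (fun x => (x - c) * E x) F c 0).
- by rewrite -EFinB /F /E !subrr mulr0 expR0; congr EFin; ring.
- by move=> x cx; rewrite mulr_ge0 ?subr_ge0 ?expR_ge0.
- exact/continuous_subspaceT/(continuous_of_derive _ _ dfE).
- rewrite FE (_ : 0 = - b^-1 * 0 + - b ^- 2 * 0); last by ring.
  apply: cvgD; apply: cvgMr; [exact: cvgy_mul_expR_Nshift | exact: cvgy_expR_Nshift].
- by move=> x _; have := dF x => ?; exact: ex_derive.
- exact/cvg_at_right_filter/(continuous_of_derive _ _ dF).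
- by move=> x _; rewrite derive1E; exact: derive_val.
Qed.

End exponential_moment.

Section gaussian.
Context {R : realType}.
Local Open Scope classical_set_scope.
Local Notation mu := (@lebesgue_measure R).

Lemma integral_normal_prob (m s : R) (f : R -> \bar R) :
  (forall x, 0 <= f x)%E -> measurable_fun [set: R] f ->
  (\int[normal_prob m s]_x f x = \int[mu]_x (f x * (normal_pdf m s x)%:E))%E.
Proof.
move=> f_ge0 mf; have dom := normal_prob_dominates m s.
rewrite -(Radon_Nikodym_SigmaFinite.change_of_variables dom) //.
have int_f := Radon_Nikodym_SigmaFinite.f_integrable dom.
apply: ae_eq_integral => //.
- exact: emeasurable_funM (measurable_int _ int_f).
- by apply: emeasurable_funM => //; apply/measurable_EFinP; exact: measurable_normal_pdf.
- apply: ae_eqe_mul2l; apply: integral_ae_eq => //.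
  + by apply/measurable_EFinP; exact: measurable_normal_pdf.
  + by move=> E _ mE; rewrite -(Radon_Nikodym_SigmaFinite.f_integral dom).
Qed.

(* Completing the square: [x^2 >= c^2 + 2 c (|x| - c)]. *)
Lemma normal_pdf_le_expR (s c x : R) : s != 0 ->
  normal_pdf 0 s x <= normal_pdf 0 s c * expR (- (c / s ^+ 2) * (`|x| - c)).
Proof.
move=> s_neq0; rewrite /normal_pdf (negbTE s_neq0) -mulrA.
rewrite ler_wpM2l ?normal_peak_ge0 // /normal_fun -expRD ler_expR !subr0.
rewrite -(real_normK (num_real x)); set a := `|x|.
have -> : - c ^+ 2 / (s ^+ 2 *+ 2) + - (c / s ^+ 2) * (a - c) =
          - a ^+ 2 / (s ^+ 2 *+ 2) + (a - c) ^+ 2 / (s ^+ 2 *+ 2).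
  by field; rewrite s_neq0.
by rewrite lerDl divr_ge0 ?sqr_ge0 // mulrn_wge0 // sqr_ge0.
Qed.

Lemma continuous_max0_abs_sub (c : R) : continuous (fun x : R => Num.max 0 (`|x| - c)).
Proof.
have -> : (fun x : R => Num.max 0 (`|x| - c)) = cst 0 \max (fun x => `|x| - c) by [].
apply: max_fun_continuous; first exact: cst_continuous.
by move=> x; apply: cvgB; [exact: norm_continuous | exact: cvg_cst].
Qed.

Lemma continuous_max0_abs_sub_mul_expR (b c : R) :
  continuous (fun x : R => Num.max 0 (`|x| - c) * expR (- b * (`|x| - c))).
Proof.
move=> x; apply: cvgM; first exact: continuous_max0_abs_sub.
apply: continuous_comp; last exact: continuous_expR.
by apply: cvgMr; apply: cvgB; [exact: norm_continuous | exact: cvg_cst].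
Qed.

Lemma integral_max0_abs_sub_mul_expR (b c : R) : 0 < b -> 0 <= c ->
  (\int[mu]_x (Num.max 0 (`|x| - c) * expR (- b * (`|x| - c)))%:E =
   (2 * b ^- 2)%:E)%E.
Proof.
move=> b_gt0 c_ge0.
have h_ge0 (x : R) : 0 <= Num.max 0 (`|x| - c) * expR (- b * (`|x| - c)).
  by rewrite mulr_ge0 ?expR_ge0 // le_max lexx.
have cont_h := continuous_max0_abs_sub_mul_expR b c.
rewrite ge0_symfun_integralT //; last by move=> x; rewrite /= normrN.
have -> : (\int[mu]_(x in [set x | (0 <= x)%R])
      (Num.max 0 (`|x| - c) * expR (- b * (`|x| - c)))%:E =
    \int[mu]_(x in `[c, +oo[) ((x - c) * expR (- b * (x - c)))%:E)%E.
  rewrite -set_itvcy integral_mkcond [RHS]integral_mkcond; apply: eq_integral => x _.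
  rewrite /patch !mem_setE !in_itv /= !andbT.
  have [cx|xc] := leP c x.
    have x_ge0 : 0 <= x := le_trans c_ge0 cx.
    by rewrite x_ge0 ger0_norm // max_r // subr_ge0.
  by case: ifPn => // x_ge0; rewrite max_l ?mul0r // subr_le0 ger0_norm // ltW.
by rewrite integral_shift_mul_expR // -EFinM.
Qed.

Lemma integral_normal_prob_tail_le (s c : R) : 0 < s -> 0 < c ->
  (\int[normal_prob 0 s]_x (Num.max 0 (`|x| - c))%:E <=
   (normal_pdf 0 s c * (2 * (c / s ^+ 2) ^- 2))%:E)%E.
Proof.
move=> s_gt0 c_gt0; set b := c / s ^+ 2.
have b_gt0 : 0 < b by rewrite divr_gt0 // exprn_gt0.
have pos_ge0 (x : R) : 0 <= Num.max 0 (`|x| - c) by rewrite le_max lexx.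
have mpos := continuous_measurable_fun (continuous_max0_abs_sub c).
have mh := continuous_measurable_fun (continuous_max0_abs_sub_mul_expR b c).
rewrite integral_normal_prob //; last exact/measurable_EFinP.
rewrite EFinM -(integral_max0_abs_sub_mul_expR b c b_gt0 (ltW c_gt0)).
rewrite -ge0_integralZl_EFin ?normal_pdf_ge0 //; last 2 first.
- by move=> x _; rewrite lee_fin mulr_ge0 ?expR_ge0.
- exact/measurable_EFinP.
apply: ge0_le_integral => //.
- by move=> x _; rewrite -EFinM lee_fin mulr_ge0 ?normal_pdf_ge0.
- apply: emeasurable_funM; apply/measurable_EFinP => //.
  exact: measurable_normal_pdf.
- by apply: emeasurable_funM => //; apply/measurable_EFinP.
- move=> x _; rewrite -!EFinM lee_fin mulrCA.
  apply: ler_wpM2l; first exact: pos_ge0.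
  exact: normal_pdf_le_expR s c x (lt0r_neq0 s_gt0).
Qed.

Definition gauss_threshold (s N : R) : R := s * Num.sqrt (2 * ln N).

Lemma normal_pdf_gauss_threshold (s N : R) : 0 < s -> 1 < N ->
  normal_pdf 0 s (gauss_threshold s N) = normal_peak s / N.
Proof.
move=> s_gt0 N_gt1; rewrite /normal_pdf gt_eqF // /normal_fun subr0.
rewrite /gauss_threshold exprMn sqr_sqrtr; last by rewrite mulr_ge0 // ln_ge0 // ltW.
rewrite (_ : - (s ^+ 2 * (2 * ln N)) / (s ^+ 2 *+ 2) = - ln N); last first.
  by field; rewrite gt_eqF.
by rewrite expRN lnK // posrE (lt_trans ltr01).
Qed.

Lemma gauss_threshold_boundE (s N : R) : 0 < s -> 1 < N ->
  gauss_threshold s N +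
    2 * N * (normal_pdf 0 s (gauss_threshold s N) *
             (2 * (gauss_threshold s N / s ^+ 2) ^- 2)) =
  s * Num.sqrt 2 * (Num.sqrt (ln N) + 1 / (Num.sqrt pi * ln N)).
Proof.
move=> s_gt0 N_gt1; have L_gt0 : 0 < ln N := ln_gt0 N_gt1.
rewrite normal_pdf_gauss_threshold // /normal_peak.
have -> : Num.sqrt (s ^+ 2 * pi *+ 2) = s * Num.sqrt pi * Num.sqrt 2.
  rewrite -mulr_natr -mulrA sqrtrM ?sqr_ge0 // sqrtr_sqr ger0_norm ?ltW //.
  by rewrite sqrtrM ?pi_ge0 // mulrA.
have -> : (gauss_threshold s N / s ^+ 2) ^+ 2 = 2 * ln N / s ^+ 2.
  rewrite expr_div_n /gauss_threshold exprMn sqr_sqrtr ?mulr_ge0 ?ln_ge0 ?ltW //.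
  by field; rewrite gt_eqF.
(* once [sqrt 2] no longer occurs inverted, the identity holds with it as an atom *)
have sqrt2V : (Num.sqrt 2)^-1 = Num.sqrt 2 / 2 :> R.
  have sqrt2_neq0 : Num.sqrt 2 != 0 :> R by rewrite gt_eqF // sqrtr_gt0.
  by rewrite -[in X in _ = _ / X](sqr_sqrtr (ler0n R 2)) expr2 invfM mulrA divff ?mul1r.
rewrite /gauss_threshold sqrtrM ?ler0n // !invfM sqrt2V.
by field; rewrite !gt_eqF ?sqrtr_gt0 ?pi_gt0 // (lt_trans ltr01).
Qed.

End gaussian.

Lemma measurable_fun_bigmaxr d (T : measurableType d) (R : realType) (I : Type)
    (r : seq I) (D : set T) (F : I -> T -> R) :
  (forall i, measurable_fun D (F i)) ->
  measurable_fun D (fun x => \big[Num.max/0]_(i <- r) F i x).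
Proof.
move=> mF; elim: r => [|i r IH].
  by under eq_fun do rewrite big_nil; exact: measurable_cst.
by under eq_fun do rewrite big_cons; exact: measurable_maxr.
Qed.

Section probability_bounds.
Context {d} {T : measurableType d} {R : realType} {P : probability T R}.

Lemma expectation_bigmax_le {I : finType} (X : I -> T -> R) (c : R) :
  0 <= c -> (forall i, measurable_fun [set: T] (X i)) ->
  ('E_P[fun w => \big[Num.max/0%R]_i X i w] <=
   c%:E + \sum_i \int[P]_w (Num.max 0 (X i w - c))%:E)%E.
Proof.
move=> c_ge0 mX; rewrite unlock.
have pos_ge0 i w : 0 <= Num.max 0 (X i w - c) by rewrite le_max lexx.
have mpos i : measurable_fun [set: T] (fun w => Num.max 0 (X i w - c)).
  by apply: measurable_maxr => //; exact: measurable_funB.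
apply: (@le_trans _ _ (\int[P]_w (c%:E + \sum_i (Num.max 0 (X i w - c))%:E))%E).
  apply: ge0_le_integral => //.
  - by move=> w _; rewrite lee_fin bigmax_ge_id.
  - by apply/measurable_EFinP; exact: measurable_fun_bigmaxr.
  - by apply: emeasurable_funD => //; apply: emeasurable_sum => i; apply/measurable_EFinP.
  - by move=> w _; rewrite sumEFin -EFinD lee_fin bigmax_le_add_sum_pos.
rewrite ge0_integralD //; last 2 first.
- by move=> w _; rewrite sume_ge0 // => i _; rewrite lee_fin.
- by apply: emeasurable_sum => i; apply/measurable_EFinP.
rewrite integral_cst //= probability_setT mule1 ge0_integral_sum //.
- by move=> i; apply/measurable_EFinP.
- by move=> i w _; rewrite lee_fin.
Qed.

(* [normal_prob] is a measure on [measurableTypeR R], which has the same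
   measurable sets as the canonical structure on [R] used by [{RV P >-> R}]. *)
Definition mfunR (X : {RV P >-> R}) : {mfun T >-> measurableTypeR R} :=
  HB.pack (X : T -> measurableTypeR R)
    (isMeasurableFun.Build _ _ _ _ _
      (measurable_funPT X : measurable_fun [set: T] (X : T -> measurableTypeR R))).

Lemma ge0_integral_normally_distributed (h : R -> R) {X : {RV P >-> R}} {m s : R} :
  normally_distributed X m s -> (forall x, 0 <= h x) -> measurable_fun [set: R] h ->
  (\int[P]_w (h (X w))%:E = \int[normal_prob m s]_y (h y)%:E)%E.
Proof.
move=> X_normal h_ge0 mh.
rewrite (_ : \int[P]_w (h (X w))%:E = \int[distribution P (mfunR X)]_y (h y)%:E)%E.
  by apply: eq_measure_integral => A mA _; exact: X_normal.
by rewrite ge0_integral_distribution //; exact/measurable_EFinP.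
Qed.

Lemma expectation_row_latency_le {Nt : nat} {Z : 'I_(2 * Nt) -> {RV P >-> R}}
    {mu c t : R} :
  0 < mu -> 0 <= c ->
  (forall j, (\int[P]_w (Num.max 0 (`|Z j w| - c))%:E <= t%:E)%E) ->
  ('E_P[row_latency Z mu] <= ((c + (2 * Nt)%:R * t) / mu)%:E)%E.
Proof.
move=> mu_gt0 c_ge0 tail.
have muV_ge0 : 0 <= mu^-1 by rewrite invr_ge0 ltW.
have scale (z : R) : Num.max 0 (z / mu - c / mu) = mu^-1 * Num.max 0 (z - c).
  by rewrite [RHS]mulrC maxr_pMl // mul0r mulrBl.
rewrite /row_latency.
apply: le_trans
  (expectation_bigmax_le (fun j w => `|Z j w| / mu) _ (divr_ge0 c_ge0 (ltW mu_gt0)) _) _.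
  by move=> j; apply: measurable_funM => //; exact: measurableT_comp.
under eq_bigr => j _.
  under eq_integral => w _ do rewrite scale EFinM.
  rewrite ge0_integralZl_EFin //; last 2 first.
  - by move=> w _; rewrite lee_fin le_max lexx.
  - apply/measurable_EFinP; apply: measurable_maxr => //.
    by apply: measurable_funB => //; exact: measurableT_comp.
  over.
apply: (@le_trans _ _ ((c / mu)%:E + \sum_(j < 2 * Nt) ((mu^-1)%:E * t%:E)))%E.
  by rewrite leeD2l // lee_sum // => j _; rewrite lee_wpmul2l ?lee_fin.
under eq_bigr do rewrite -EFinM.
rewrite sumEFin -EFinD sumr_const card_ord lee_fin -mulr_natl.
by rewrite le_eqVlt; apply/orP; left; apply/eqP; field; rewrite gt_eqF.
Qed.

End probability_bounds.

Theorem theorem1 (R : realType) (d : measure_display) (T : measurableType d)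
  (P : probability T R) (Gmax mu : R) (Nr Nt : nat)
  (Z : 'I_(2 * Nt) -> {RV P >-> R}) :
  0 < Gmax -> 0 < mu -> (1 <= Nr)%N -> (2 <= Nt)%N ->
  mutually_independent_RV Z ->
  (forall j, normally_distributed (Z j) 0 (Gmax / 3)) ->
  (write_latency Nr Z mu <=
   ((2 * Num.sqrt 2 * Gmax) / (3 * mu) * Nr%:R *
    (Num.sqrt (ln Nt%:R) + 1 / (Num.sqrt pi * ln Nt%:R)))%:E)%E.
Proof.
move=> Gmax_gt0 mu_gt0 _ Nt_ge2 _ Z_normal.
set s := Gmax / 3; have s_gt0 : 0 < s by rewrite divr_gt0.
have Nt_gt1 : 1 < Nt%:R :> R by rewrite ltr1n.
set c := gauss_threshold s Nt%:R.
have c_gt0 : 0 < c by rewrite mulr_gt0 // sqrtr_gt0 mulr_gt0 // ln_gt0.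
have tail j : (\int[P]_w (Num.max 0 (`|Z j w| - c))%:E <=
    (normal_pdf 0 s c * (2 * (c / s ^+ 2) ^- 2))%:E)%E.
  rewrite (ge0_integral_normally_distributed (fun x => Num.max 0 (`|x| - c))
    (Z_normal j)).
  - exact: integral_normal_prob_tail_le.
  - by move=> x; rewrite le_max lexx.
  - exact: continuous_measurable_fun (continuous_max0_abs_sub c).
rewrite /write_latency.
apply: le_trans (lee_wpmul2l _ (expectation_row_latency_le mu_gt0 (ltW c_gt0) tail)) _.
  by rewrite lee_fin.
rewrite !natrM /c gauss_threshold_boundE // -EFinM lee_fin le_eqVlt; apply/orP; left.
have sqrt_pi_gt0 : 0 < Num.sqrt pi :> R by rewrite sqrtr_gt0 pi_gt0.
by apply/eqP; rewrite /s; field; rewrite !lt0r_neq0 // ln_gt0.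
Qed.
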